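(* Let $A_1,A_2$ be $n$-dimensional algebras and let $K:A_1\to A_2$ be an algebra isomorphism (identified with its matrix). For $s_1\in A_1$ put $s_2=Ks_1$. Then for all $s_1$ in an open ball centered at $\mathbf{1}_{A_1}$ consisting only of units, the following two collections of (path-independent) line integrals coincide: $$\Big\{\int_{\mathbf{1}_{A_1}}^{s_1}[L_1t_1^{-1}]\cdot\mathbf{d}t_1:\ L_1\in\mathfrak{u}_{A_1}\Big\}=\Big\{\int_{\mathbf{1}_{A_2}}^{s_2}[L_2t_2^{-1}]\cdot\mathbf{d}t_2:\ L_2\in\mathfrak{u}_{A_2}\Big\}.$$
   Context: An ''algebra'' is a real finite-dimensional unital associative algebra with underlying vector space $\mathbb{R}^n$, standard basis and topology, elements as column vectors $s=(x_1,\dots,x_n)^T$, $\mathbf{d}s=(dx_1,\dots,dx_n)^T$, and ''$\cdot$'' the Euclidean dot product. An uncurling metric of $A$ is a real symmetric $n\times n$ matrix $L$ with $d\big((s^{-1})^TL\,\mathbf{d}s\big)=0$ on an open ball centered at $\mathbf{1}_A$ consisting only of units; the anti-rotor $\mathfrak{u}_A$ is the vector space of all uncurling metrics. For $L\in\mathfrak{u}_A$ the integral $\int_{\mathbf{1}}^{s}[Lt^{-1}]\cdot\mathbf{d}t$ is path-independent within such a ball. *)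

From HB Require Import structures.
From mathcomp Require Import all_boot all_order all_algebra.
From mathcomp Require Import all_classical all_reals all_analysis.
Set Implicit Arguments. Unset Strict Implicit. Unset Printing Implicit Defensive.
Import Order.TTheory GRing.Theory Num.Theory.
Local Open Scope classical_set_scope.
Local Open Scope ring_scope.

(* A real n-dimensional unital associative algebra on R^n (column vectors),
   given by its structure constants: (e_i e_j)_k = sc i j k.  Bilinearity
   is automatic; associativity and the two-sided unit are required. *)
Definition amul_sc (R : realType) (n : nat) (sc : 'I_n -> 'I_n -> 'I_n -> R)
  (x y : 'cV[R]_n) : 'cV[R]_n :=
  \col_k (\sum_i \sum_j sc i j k * x i 0 * y j 0).

Record algebra (R : realType) (n : nat) := Algebra {
  sc : 'I_n -> 'I_n -> 'I_n -> R;
  aone : 'cV[R]_n;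
  amulA : forall x y z, amul_sc sc x (amul_sc sc y z) = amul_sc sc (amul_sc sc x y) z;
  amul1x : forall x, amul_sc sc aone x = x;
  amulx1 : forall x, amul_sc sc x aone = x }.

Definition amul (R : realType) (n : nat) (A : algebra R n) := amul_sc (sc A).

Definition is_inverse (R : realType) (n : nat) (A : algebra R n) (s t : 'cV[R]_n) :=
  amul A s t = aone A /\ amul A t s = aone A.
Definition isunit (R : realType) (n : nat) (A : algebra R n) (s : 'cV[R]_n) :=
  exists t, is_inverse A s t.
Definition ainv (R : realType) (n : nat) (A : algebra R n) (s : 'cV[R]_n) : 'cV[R]_n :=
  xget 0 [set t | is_inverse A s t].

Definition dotv (R : realType) (n : nat) (u v : 'cV[R]_n) : R := \sum_i u i 0 * v i 0.
Definition eball (R : realType) (n : nat) (c : 'cV[R]_n) (r : R) : set 'cV[R]_n :=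
  [set s | dotv (s - c) (s - c) < r ^+ 2].

Definition evec (R : realType) (n : nat) (j : 'I_n) : 'cV[R]_n := \col_k (k == j)%:R.

(* i-th component of the 1-form (s^{-1})^T L ds, i.e. (L s^{-1})_i *)
Definition omega (R : realType) (n : nat) (A : algebra R n) (L : 'M[R]_n)
  (i : 'I_n) (s : 'cV[R]_n) : R := (L *m ainv A s) i 0.

Definition partial (R : realType) (n : nat) (f : 'cV[R]_n -> R) (j : 'I_n) (s : 'cV[R]_n) : R :=
  derive1 (fun t : R => f (s + t *: @evec R n j)) 0.
Definition partial_exists (R : realType) (n : nat) (f : 'cV[R]_n -> R) (j : 'I_n) (s : 'cV[R]_n) :=
  derivable (fun t : R => f (s + t *: @evec R n j)) 0 1.

Definition closed_at (R : realType) (n : nat) (A : algebra R n) (L : 'M[R]_n) (s : 'cV[R]_n) :=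
  forall i j : 'I_n, partial_exists (omega A L i) j s /\
    partial (omega A L i) j s = partial (omega A L j) i s.

Definition uncurling (R : realType) (n : nat) (A : algebra R n) (L : 'M[R]_n) :=
  L^T = L /\
  exists r : R, 0 < r /\ (forall s, eball (aone A) r s -> isunit A s) /\
    (forall s, eball (aone A) r s -> closed_at A L s).
Definition antirotor (R : realType) (n : nat) (A : algebra R n) : set 'M[R]_n :=
  [set L | uncurling A L].

(* the (path-independent) line integral int_1^s [L t^{-1}] . dt, computed along
   the straight segment t = 1 + tau (s - 1), tau in [0,1] *)
Definition lineint (R : realType) (n : nat) (A : algebra R n) (L : 'M[R]_n) (s : 'cV[R]_n) : R :=
  Rintegral lebesgue_measure `[0, 1]
    (fun tau : R => dotv (L *m ainv A (aone A + tau *: (s - aone A))) (s - aone A)).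

Definition alg_iso (R : realType) (n : nat) (A1 A2 : algebra R n) (K : 'M[R]_n) :=
  K \in unitmx /\ K *m aone A1 = aone A2 /\
  forall x y, K *m amul A1 x y = amul A2 (K *m x) (K *m y).

From HB Require Import structures.
From mathcomp Require Import all_boot all_order all_algebra.
From mathcomp Require Import all_classical all_reals all_analysis.
From mathcomp Require Import ring lra.
Import numFieldNormedType.Exports.
Import Order.TTheory GRing.Theory Num.Theory.
Local Open Scope classical_set_scope.
Local Open Scope ring_scope.
Set Implicit Arguments. Unset Strict Implicit. Unset Printing Implicit Defensive.

(** An algebra isomorphism [K] commutes with inversion, [(K s)^-1 = K s^-1], so the
    congruence [L |-> K^-T L K^-1] turns the line integrals of [L] in [A1] into the
    line integrals of its image in [A2].  The congruence also preserves uncurling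
    metrics: the derivative of inversion at a unit [u] is [v |-> - u^-1 v u^-1], so
    the 1-form of [L] is closed at [u] exactly when [L (u^-1 _ u^-1)] is a symmetric
    matrix, and transporting by [K] replaces this matrix by a congruent one.  Doing
    the same with [K^-1] gives the reverse inclusion. *)

Lemma mulmx_cV_inj (R : pzSemiRingType) m n (X Y : 'M[R]_(m, n)) :
  (forall y : 'cV[R]_n, X *m y = Y *m y) -> X = Y.
Proof.
move=> XY; apply/matrixP => i j.
by have := congr1 (fun M : 'cV_m => M i 0) (XY (delta_mx j 0)); rewrite -!colE !mxE.
Qed.

Section Coordinates.
Variables (R : realType) (n : nat).
Implicit Types (x : 'cV[R]_n) (M : 'M[R]_n).

Lemma mulmx_evec M i j : (M *m @evec R n j) i 0 = M i j.
Proof.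
rewrite mxE (bigD1 j) //= big1 ?addr0; first by rewrite mxE eqxx mulr1.
by move=> k /negbTE kj; rewrite mxE kj mulr0.
Qed.

Lemma sqr_coord_le_dotv x k : x k 0 ^+ 2 <= dotv x x.
Proof.
rewrite /dotv (bigD1 k) //= expr2 lerDl.
by apply: sumr_ge0 => i _; rewrite -expr2 sqr_ge0.
Qed.

Lemma dotv_le_sqr_sum_norm x : dotv x x <= (\sum_i `|x i 0|) ^+ 2.
Proof.
suff [] : 0 <= \sum_i `|x i 0| /\ dotv x x <= (\sum_i `|x i 0|) ^+ 2 by [].
rewrite /dotv; elim/big_rec2: _ => [|i s d _ [s_ge0 le_ds]]; first by rewrite expr0n.
have xi_ge0 := normr_ge0 (x i 0).
have sqr_xi : x i 0 * x i 0 = `|x i 0| * `|x i 0|.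
  by rewrite -normrM ger0_norm // -expr2 sqr_ge0.
by split; rewrite ?sqr_xi ?expr2 in le_ds *; nra.
Qed.

Lemma mulmx_dotv_small M (r : R) : 0 < r ->
  exists2 rho, 0 < rho &
    forall x, dotv x x < rho ^+ 2 -> dotv (M *m x) (M *m x) < r ^+ 2.
Proof.
move=> r_gt0; set S := \sum_i \sum_k `|M i k|.
have S_ge0 : 0 <= S by apply: sumr_ge0 => i _; apply: sumr_ge0.
have rho_gt0 : 0 < r / (1 + S) by rewrite divr_gt0 //; lra.
exists (r / (1 + S)) => // x x_small; set rho := r / (1 + S) in rho_gt0 x_small *.
have coord_lt k : `|x k 0| < rho.
  have := le_lt_trans (sqr_coord_le_dotv x k) x_small; rewrite !expr2 => sqr_lt.
  by rewrite ltr_norml; apply/andP; split; nra.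
have sum_le : \sum_i `|(M *m x) i 0| <= S * rho.
  rewrite /S big_distrl /=; apply: ler_sum => i _; rewrite mxE big_distrl /=.
  apply: (le_trans (ler_norm_sum _ _ _)); apply: ler_sum => k _.
  by rewrite normrM ler_wpM2l // ltW.
have Srho_lt : S * rho < r by rewrite /rho mulrA ltr_pdivrMr; nra.
apply: (le_lt_trans (dotv_le_sqr_sum_norm _)).
have : 0 <= \sum_i `|(M *m x) i 0| by apply: sumr_ge0.
by rewrite !expr2; nra.
Qed.

End Coordinates.

Section AlgebraInverse.
Variables (R : realType) (n : nat) (A : algebra R n).
Implicit Types (x y z s t u v : 'cV[R]_n).

Lemma amulrA x y z : amul A x (amul A y z) = amul A (amul A x y) z.
Proof. exact: amulA. Qed.

Lemma amul1r x : amul A (aone A) x = x.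
Proof. exact: amul1x. Qed.

Lemma amulr1 x : amul A x (aone A) = x.
Proof. exact: amulx1. Qed.

Definition lmulmx x : 'M[R]_n := \matrix_(k, j) \sum_i sc A i j k * x i 0.
Definition rmulmx y : 'M[R]_n := \matrix_(k, i) \sum_j sc A i j k * y j 0.

Lemma lmulmxE x y : lmulmx x *m y = amul A x y.
Proof.
apply/matrixP => k l; rewrite /lmulmx /amul /amul_sc !mxE (ord1 l) exchange_big /=.
by apply: eq_bigr => j _; rewrite mxE big_distrl.
Qed.

Lemma rmulmxE x y : rmulmx y *m x = amul A x y.
Proof.
apply/matrixP => k l; rewrite /rmulmx /amul /amul_sc !mxE (ord1 l).
by apply: eq_bigr => i _; rewrite mxE big_distrl /=; apply: eq_bigr => j _; ring.
Qed.

Lemma amulrBr x y z : amul A x (y - z) = amul A x y - amul A x z.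
Proof. by rewrite -!lmulmxE mulmxBr. Qed.

Lemma amulrBl x y z : amul A (x - y) z = amul A x z - amul A y z.
Proof. by rewrite -!rmulmxE mulmxBr. Qed.

Lemma amulZr (c : R) x y : amul A x (c *: y) = c *: amul A x y.
Proof. by rewrite -!lmulmxE scalemxAr. Qed.

Lemma amulZl (c : R) x y : amul A (c *: x) y = c *: amul A x y.
Proof. by rewrite -!rmulmxE scalemxAr. Qed.

Lemma lmulmxM x y : lmulmx x *m lmulmx y = lmulmx (amul A x y).
Proof. by apply: mulmx_cV_inj => z; rewrite -mulmxA !lmulmxE amulrA. Qed.

Lemma lmulmx1 : lmulmx (aone A) = 1%:M.
Proof. by apply: mulmx_cV_inj => z; rewrite lmulmxE mul1mx amul1r. Qed.

Lemma lmulmxDZ u v (c : R) : lmulmx (u + c *: v) = lmulmx u + c *: lmulmx v.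
Proof.
apply/matrixP => k j; rewrite !mxE big_distrr -big_split /=.
by apply: eq_bigr => i _; rewrite !mxE; ring.
Qed.

Lemma is_inverse_uniq s t t' : is_inverse A s t -> is_inverse A s t' -> t = t'.
Proof.
move=> [_ ts] [st' _].
by rewrite -[t]amulr1 -st' amulrA ts amul1r.
Qed.

Lemma ainvE s t : is_inverse A s t -> ainv A s = t.
Proof.
by move=> st; apply: xget_unique => // t' /= st'; apply: is_inverse_uniq st' st.
Qed.

Lemma ainvP s : isunit A s -> is_inverse A s (ainv A s).
Proof. by case=> t st; rewrite (ainvE st). Qed.

Lemma ainv_nonunit s : ~ isunit A s -> ainv A s = 0.
Proof. by move=> sN; apply: xgetPN => t st; apply: sN; exists t. Qed.

Lemma is_inverse_lmulmx x :
  lmulmx x \in unitmx -> is_inverse A x (invmx (lmulmx x) *m aone A).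
Proof.
move=> xU; set y := invmx _ *m _.
have xy : amul A x y = aone A by rewrite -lmulmxE mulmxA mulmxV // mul1mx.
have yx : lmulmx y *m lmulmx x = 1%:M by apply: mulmx1C; rewrite lmulmxM xy lmulmx1.
split=> //; have -> : x = lmulmx x *m aone A by rewrite lmulmxE amulr1.
by rewrite -lmulmxE mulmxA yx mul1mx.
Qed.

Lemma ainv_lmulmx x : lmulmx x \in unitmx -> ainv A x = invmx (lmulmx x) *m aone A.
Proof. by move/is_inverse_lmulmx/ainvE. Qed.

Lemma isunit_lmulmxP x : isunit A x <-> lmulmx x \in unitmx.
Proof.
split=> [[t [xt _]] | xU]; last by eexists; apply: is_inverse_lmulmx.
have [] // : lmulmx x \in unitmx /\ lmulmx t \in unitmx.
by apply: mulmx1_unit; rewrite lmulmxM xt lmulmx1.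
Qed.

Lemma ainvB u x : isunit A u -> isunit A x ->
  ainv A u - ainv A x = amul A (amul A (ainv A u) (x - u)) (ainv A x).
Proof.
move=> /ainvP[_ uu] /ainvP[xx _].
by rewrite amulrBr uu amulrBl -amulrA xx amulr1 amul1r.
Qed.

End AlgebraInverse.

Section InverseDerivative.
Variables (R : realType) (n : nat) (A : algebra R n).
Implicit Types (u v : 'cV[R]_n) (L : 'M[R]_n).

Definition lmulmx_line u v : 'M[{poly R}]_n :=
  \matrix_(k, j) ((lmulmx A u k j)%:P + (lmulmx A v k j)%:P * 'X).

Lemma map_lmulmx_line u v (t : R) :
  map_mx (horner_eval t) (lmulmx_line u v) = lmulmx A (u + t *: v).
Proof.
rewrite lmulmxDZ; apply/matrixP => k j; rewrite !mxE /horner_eval.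
by rewrite hornerD hornerMX !hornerC mulrC.
Qed.

Lemma det_lmulmx_line u v (t : R) :
  (\det (lmulmx_line u v)).[t] = \det (lmulmx A (u + t *: v)).
Proof. by rewrite -map_lmulmx_line det_map_mx. Qed.

Lemma isunit_line_det u v (t : R) :
  isunit A (u + t *: v) <-> (\det (lmulmx_line u v)).[t] != 0.
Proof. by rewrite det_lmulmx_line -unitfE -unitmxE; exact: isunit_lmulmxP. Qed.

(* Cramer's rule; off the units both sides vanish, as [ainv] is [0] there and
   [_ / 0 = 0]. *)
Lemma ainv_line_cramer u v (t : R) a :
  ainv A (u + t *: v) a 0 =
  ((\adj (lmulmx_line u v) *m map_mx polyC (aone A)) a 0).[t] /
  (\det (lmulmx_line u v)).[t].
Proof.
have adjE : ((\adj (lmulmx_line u v) *m map_mx polyC (aone A)) a 0).[t] =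
            (\adj (lmulmx A (u + t *: v)) *m aone A) a 0.
  rewrite -map_lmulmx_line -map_mx_adj.
  have {2}-> : aone A = map_mx (horner_eval t) (map_mx polyC (aone A)).
    by apply/matrixP => i j; rewrite !mxE /horner_eval hornerC.
  by rewrite -map_mxM [in RHS]mxE.
rewrite adjE det_lmulmx_line.
have [xU | xN] := boolP (lmulmx A (u + t *: v) \in unitmx).
  by rewrite ainv_lmulmx // /invmx xU -scalemxAl mxE mulrC.
have -> : \det (lmulmx A (u + t *: v)) = 0.
  by apply/eqP; move: xN; rewrite unitmxE unitfE negbK.
by rewrite invr0 mulr0 ainv_nonunit ?mxE // => /isunit_lmulmxP; rewrite (negbTE xN).
Qed.

Lemma isunit_line_near u v : isunit A u -> \forall t \near 0, isunit A (u + t *: v).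
Proof.
move=> uU; have det0 : (\det (lmulmx_line u v)).[0] != 0.
  by apply/isunit_line_det; rewrite scale0r addr0.
near=> t; apply/isunit_line_det; near: t.
exact: cvgr_neq0 (@continuous_horner _ _ 0) det0.
Unshelve. all: by end_near.
Qed.

Lemma ainv_line_cvg u v a : isunit A u ->
  (fun t : R => ainv A (u + t *: v) a 0) @ 0 --> ainv A u a 0.
Proof.
move=> uU; have det0 : (\det (lmulmx_line u v)).[0] != 0.
  by apply/isunit_line_det; rewrite scale0r addr0.
rewrite -[u in ainv A u](addr0 u) -(scale0r v).
under eq_fun do rewrite ainv_line_cramer; rewrite ainv_line_cramer.
by apply: cvgM; [|apply: cvgV => //]; apply: continuous_horner.
Qed.

Lemma mulmx_ainv_line_cvg L u v i : isunit A u ->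
  (fun t : R => (L *m ainv A (u + t *: v)) i 0) @ 0 --> (L *m ainv A u) i 0.
Proof.
move=> uU; rewrite mxE; under eq_fun do rewrite mxE.
apply: cvg_big; first exact: add_continuous.
by move=> a _; apply: cvgM; [exact: cvg_cst | exact: ainv_line_cvg].
Qed.

Definition dinv_mx u : 'M[R]_n := lmulmx A (ainv A u) *m rmulmx A (ainv A u).

Lemma dinv_mxE u v : dinv_mx u *m v = amul A (amul A (ainv A u) v) (ainv A u).
Proof. by rewrite -mulmxA rmulmxE lmulmxE amulrA. Qed.

Lemma is_derive_ainv_line L u v i : isunit A u ->
  is_derive (0 : R) 1 (fun t => (L *m ainv A (u + t *: v)) i 0)
    (- (L *m dinv_mx u *m v) i 0).
Proof.
move=> uU; set F := fun t : R => _.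
set N := L *m lmulmx A (amul A (ainv A u) v).
have entryB (X Y : 'cV[R]_n) : (X - Y) i 0 = X i 0 - Y i 0 by rewrite !mxE.
(* [ainvB] turns the difference quotient into a function continuous at [0]. *)
have quotE : \forall t \near 0^',
    - (N *m ainv A (u + t *: v)) i 0 = t^-1 *: ((F \o shift 0) (t *: 1) - F 0).
  rewrite /dnbhs near_withinE /=; near=> t => t_neq0.
  have xU : isunit A (u + t *: v) by near: t; exact: isunit_line_near.
  have diffE : L *m ainv A u - L *m ainv A (u + t *: v) =
               t *: (N *m ainv A (u + t *: v)).
    rewrite -mulmxBr ainvB // [u + _ - u]addrC addKr amulZr amulZl -lmulmxE.
    by rewrite -scalemxAr mulmxA.
  rewrite /F /= addr0 scale0r addr0 [t *: 1]mulr1 -entryB -opprB diffE !mxE.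
  by rewrite -[t^-1 *: _]/(t^-1 * _) mulrN mulrA mulVf // mul1r.
have quot_cvg : (fun h : R => h^-1 *: ((F \o shift 0) (h *: 1) - F 0)) @ 0^' -->
                - (N *m ainv A u) i 0.
  apply: cvg_trans (near_eq_cvg quotE) _.
  by apply: cvg_within_filter; apply: cvgN; exact: mulmx_ainv_line_cvg.
have -> : - (L *m dinv_mx u *m v) i 0 = - (N *m ainv A u) i 0.
  by rewrite /N -mulmxA dinv_mxE -mulmxA lmulmxE.
split; first by apply/cvg_ex; eexists; exact: quot_cvg.
by rewrite /derive (cvg_lim _ quot_cvg).
Unshelve. all: by end_near.
Qed.

Lemma partial_omega L u i j : isunit A u ->
  partial_exists (omega A L i) j u /\
  partial (omega A L i) j u = - (L *m dinv_mx u) i j.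
Proof.
move=> uU; have D := is_derive_ainv_line L (@evec R n j) i uU.
split; first exact: ex_derive.
by rewrite /partial derive1E derive_val mulmx_evec.
Qed.

Lemma closed_at_unitP L u : isunit A u ->
  closed_at A L u <-> (L *m dinv_mx u)^T = L *m dinv_mx u.
Proof.
move=> uU; split=> [closed | sym i j].
  apply/matrixP => i j; rewrite mxE.
  by have [_] := closed j i; rewrite !(partial_omega L _ _ uU).2 => /oppr_inj.
split; first exact: (partial_omega L i j uU).1.
by rewrite !(partial_omega L _ _ uU).2 -[in LHS]sym mxE.
Qed.

End InverseDerivative.

Definition mx_congr (R : pzRingType) n (P L : 'M[R]_n) : 'M[R]_n := P^T *m L *m P.

Lemma mx_congr_sym (R : comPzRingType) n (P L : 'M[R]_n) :
  L^T = L -> (mx_congr P L)^T = mx_congr P L.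
Proof. by move=> L_sym; rewrite /mx_congr !trmx_mul trmxK L_sym mulmxA. Qed.

Section Isomorphism.
Variables (R : realType) (n : nat).

Lemma alg_iso_inv (A1 A2 : algebra R n) (K : 'M[R]_n) :
  alg_iso A1 A2 K -> alg_iso A2 A1 (invmx K).
Proof.
case=> KU [K1 KM]; split; first by rewrite unitmx_inv.
split=> [|x y]; first by rewrite -K1 mulKmx.
by rewrite -{1}(mulKVmx KU x) -{1}(mulKVmx KU y) -KM mulKmx.
Qed.

Lemma is_inverse_iso (A1 A2 : algebra R n) (K : 'M[R]_n) s t : alg_iso A1 A2 K ->
  is_inverse A1 s t -> is_inverse A2 (K *m s) (K *m t).
Proof. by case=> _ [K1 KM] [st ts]; split; rewrite -KM ?st ?ts ?K1. Qed.

Lemma isunit_iso (A1 A2 : algebra R n) (K : 'M[R]_n) s :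
  alg_iso A1 A2 K -> isunit A1 s -> isunit A2 (K *m s).
Proof. by move=> K_iso [t /(is_inverse_iso K_iso) st]; exists (K *m t). Qed.

Lemma ainv_iso (A1 A2 : algebra R n) (K : 'M[R]_n) s :
  alg_iso A1 A2 K -> ainv A2 (K *m s) = K *m ainv A1 s.
Proof.
move=> K_iso; have [sU | sN] := pselect (isunit A1 s).
  exact/ainvE/(is_inverse_iso K_iso)/ainvP.
have KsN : ~ isunit A2 (K *m s).
  by move=> /(isunit_iso (alg_iso_inv K_iso)); rewrite mulKmx //; case: K_iso.
by rewrite !ainv_nonunit // mulmx0.
Qed.

Lemma dinv_mx_iso (A1 A2 : algebra R n) (K : 'M[R]_n) u : alg_iso A1 A2 K ->
  dinv_mx A2 (K *m u) = K *m dinv_mx A1 u *m invmx K.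
Proof.
move=> K_iso; have [KU [_ KM]] := K_iso; apply: mulmx_cV_inj => v.
by rewrite dinv_mxE (ainv_iso _ K_iso) -mulmxA -mulmxA dinv_mxE !KM mulKVmx.
Qed.

Lemma dotv_mulmxl (M : 'M[R]_n) x y : dotv (M *m x) y = dotv x (M^T *m y).
Proof.
rewrite /dotv; under eq_bigr do rewrite mxE big_distrl /=.
rewrite exchange_big /=; apply: eq_bigr => j _; rewrite mxE big_distrr /=.
by apply: eq_bigr => i _; rewrite mxE; ring.
Qed.

Lemma lineint_iso (A1 A2 : algebra R n) (K : 'M[R]_n) L s : alg_iso A1 A2 K ->
  lineint A2 (mx_congr (invmx K) L) (K *m s) = lineint A1 L s.
Proof.
move=> K_iso; have [KU [K1 _]] := K_iso.
rewrite /lineint; congr Rintegral; apply/funext => tau.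
rewrite -K1 -mulmxBr scalemxAr -mulmxDr (ainv_iso _ K_iso) /mx_congr.
by rewrite -!mulmxA mulKmx // dotv_mulmxl trmxK mulKmx.
Qed.

Lemma uncurling_iso (A1 A2 : algebra R n) (K : 'M[R]_n) L : alg_iso A1 A2 K ->
  uncurling A1 L -> uncurling A2 (mx_congr (invmx K) L).
Proof.
move=> K_iso [L_sym [r [r_gt0 [ball_unit ball_closed]]]]; have [KU [K1 _]] := K_iso.
split; first exact: mx_congr_sym.
have [rho rho_gt0 small] := mulmx_dotv_small (invmx K) r_gt0.
have pull s : eball (aone A2) rho s -> eball (aone A1) r (invmx K *m s).
  by move=> /small; rewrite /eball /= mulmxBr -K1 mulKmx.
exists rho; split=> //; split=> [s /pull /ball_unit | s /pull s_near].
  by move=> /(isunit_iso K_iso); rewrite mulKVmx.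
rewrite -(mulKVmx KU s); set u := invmx K *m s in s_near *.
have uU := ball_unit _ s_near.
apply/(closed_at_unitP _ (isunit_iso K_iso uU)).
have -> : mx_congr (invmx K) L *m dinv_mx A2 (K *m u) =
          mx_congr (invmx K) (L *m dinv_mx A1 u).
  rewrite (dinv_mx_iso _ K_iso) /mx_congr -!mulmxA.
  by rewrite (mulmxA (invmx K)) mulVmx // mul1mx.
exact/mx_congr_sym/(closed_at_unitP _ uU)/ball_closed.
Qed.

Lemma lineint_image_iso (A1 A2 : algebra R n) (K : 'M[R]_n) s : alg_iso A1 A2 K ->
  [set lineint A1 L s | L in antirotor A1] `<=`
  [set lineint A2 L (K *m s) | L in antirotor A2].
Proof.
move=> K_iso _ [L L_unc <-]; exists (mx_congr (invmx K) L).
  exact: uncurling_iso K_iso L_unc.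
by apply: lineint_iso.
Qed.

End Isomorphism.

Unset Implicit Arguments.

Theorem theorem3p3 (R : realType) (n : nat) (A1 A2 : algebra R n) (K : 'M[R]_n)
  (r : R) (s1 : 'cV[R]_n) :
  alg_iso A1 A2 K ->
  0 < r -> (forall s, eball (aone A1) r s -> isunit A1 s) ->
  eball (aone A1) r s1 ->
  [set lineint A1 L1 s1 | L1 in antirotor A1] =
  [set lineint A2 L2 (K *m s1) | L2 in antirotor A2].
Proof.
move=> K_iso _ _ _; apply/seteqP; split; first exact: lineint_image_iso.
have := lineint_image_iso (s := K *m s1) (alg_iso_inv K_iso).
by rewrite mulKmx //; case: K_iso.
Qed.
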